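(* Let $W, W' \in \mathcal{D}_1$ with $W = LW'R$ and $W = \begin{pmatrix} a & b \\ c & d\end{pmatrix}$. Then \[ \sigma(W) = 2\left\lfloor \frac{\xi(a,c)}{2}\right\rfloor + 2. \]
   Context: $L = \begin{pmatrix} 1 & 0 \\ 1 & 1\end{pmatrix}$, $R = \begin{pmatrix} 1 & 1 \\ 0 & 1\end{pmatrix}$. $\mathcal{D}_1$ is the set of $2\times 2$ nonnegative integer matrices of determinant $1$; the map sending a word over $\{L,R\}$ to the product of the corresponding matrices is an isomorphism of $\{L,R\}^*$ onto $\mathcal{D}_1$, so elements of $\mathcal{D}_1$ are identified with words over $\{L,R\}$. For a finite word $V$, a run is a maximal block of consecutive equal letters, and $\sigma(V)$ is the number of runs of $V$ (e.g. $\sigma(LLRRRRL)=3$). For nonnegative integers $a,c$ not both zero, $\xi(a,c)$ is the number of divisions performed by the Euclidean algorithm computing $\gcd(a,c)$ (ending when $0$ is reached), e.g. $\xi(7,0)=0$, $\xi(7,1)=\xi(1,7)=1$, $\xi(13,5)=4$. *)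

From HB Require Import structures.
From mathcomp Require Import all_boot all_order all_algebra.
Set Implicit Arguments. Unset Strict Implicit. Unset Printing Implicit Defensive.
Import GRing.Theory.
Local Open Scope ring_scope.

Inductive letter := Lt | Rt.

Definition letter_eqb (x y : letter) : bool :=
  match x, y with Lt, Lt | Rt, Rt => true | _, _ => false end.
Lemma letter_eqP : Equality.axiom letter_eqb.
Proof. by case; case; constructor. Qed.
HB.instance Definition _ := hasDecEq.Build letter letter_eqP.

(* L = [[1,0],[1,1]], R = [[1,1],[0,1]] as 2x2 matrices over nat. *)
Definition Lmx : 'M[nat]_2 := \matrix_(i < 2, j < 2) (if (i == 0%N :> nat) && (j == 1%N :> nat) then 0%N else 1%N).
Definition Rmx : 'M[nat]_2 := \matrix_(i < 2, j < 2) (if (i == 1%N :> nat) && (j == 0%N :> nat) then 0%N else 1%N).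

Definition letter_mx (x : letter) : 'M[nat]_2 := if x is Lt then Lmx else Rmx.

(* The element of D_1 corresponding to a word: product of the letters. *)
Definition word_mx (w : seq letter) : 'M[nat]_2 :=
  foldr (fun x M => letter_mx x *m M) 1%:M w.

(* sigma(V): number of runs (maximal blocks of equal consecutive letters). *)
Fixpoint sigma (w : seq letter) : nat :=
  match w with
  | [::] => 0%N
  | x :: t => match t with
              | [::] => 1%N
              | y :: _ => (sigma t + (x != y))%N
              end
  end.

Fixpoint xi_fuel (n a c : nat) : nat :=
  match n with
  | 0 => 0%N
  | n'.+1 => if (a == 0%N) || (c == 0%N) then 0%N
             else (xi_fuel n' (minn a c) (maxn a c %% minn a c)).+1
  end.
Definition xi (a c : nat) : nat := xi_fuel (a + c) a c.

Example xi_ex1 : xi 7 0 = 0%N. Proof. by []. Qed.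
Example xi_ex2 : xi 7 1 = 1%N /\ xi 1 7 = 1%N. Proof. by []. Qed.
Example xi_ex3 : xi 13 5 = 4%N. Proof. by []. Qed.
Example sigma_ex : sigma [:: Lt; Lt; Rt; Rt; Rt; Rt; Lt] = 3%N. Proof. by []. Qed.
Example mx_ex : word_mx [:: Lt; Rt] = Lmx *m Rmx. Proof. by rewrite /word_mx /= mulmx1. Qed.

(* Prepending L or R to a word adds one entry of the first column (a, c) to
   the other, i.e. runs one subtractive Euclid step backwards.  A new run
   starts exactly when the larger entry changes sides, which is when the
   division-based Euclidean algorithm needs one more division.  So sigma and
   xi + 1 differ by at most one, and sigma (L W' R) is even, which fixes it. *)

From mathcomp Require Import all_boot all_order all_algebra zify.

Definition mx_a (w : seq letter) : nat := word_mx w ord0 ord0.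
Definition mx_c (w : seq letter) : nat := word_mx w (@inord 1 1) ord0.

Lemma lift0_inord1 : lift ord0 ord0 = @inord 1 1.
Proof. by apply: val_inj; rewrite /= inordK. Qed.

Lemma mx_a_cons x w :
  mx_a (x :: w) = if x is Rt then mx_a w + mx_c w else mx_a w.
Proof.
rewrite /mx_a /mx_c [word_mx _]/= !mxE !big_ord_recl big_ord0 lift0_inord1.
by case: x; rewrite !mxE /= ?inordK //=; lia.
Qed.

Lemma mx_c_cons x w :
  mx_c (x :: w) = if x is Lt then mx_a w + mx_c w else mx_c w.
Proof.
rewrite /mx_a /mx_c [word_mx _]/= !mxE !big_ord_recl big_ord0 lift0_inord1.
by case: x; rewrite !mxE /= ?inordK //=; lia.
Qed.

Lemma mx_a_Rt : mx_a [:: Rt] = 1.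
Proof. by rewrite /mx_a /word_mx /= mulmx1 !mxE. Qed.

Lemma mx_c_Rt : mx_c [:: Rt] = 0.
Proof. by rewrite /mx_c /word_mx /= mulmx1 !mxE /= inordK. Qed.

Lemma xi_fuel_enough n m a c :
  a + c <= n -> a + c <= m -> xi_fuel n a c = xi_fuel m a c.
Proof.
elim: n m a c => [|n IHn] [|m] a c //= le_n le_m; try by have -> : a = 0 by lia.
case: ifP => // /norP [a_neq0 c_neq0]; congr S.
have : maxn a c %% minn a c < minn a c by apply: ltn_pmod; lia.
by move=> lt_mod; apply: IHn; lia.
Qed.

Lemma xiE a c : 0 < a -> 0 < c ->
  xi a c = (xi (minn a c) (maxn a c %% minn a c)).+1.
Proof.
move=> a_gt0 c_gt0; rewrite /xi.
have -> : a + c = (a + c).-1.+1 by lia.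
rewrite /= ifN; last by apply/norP; lia.
have : maxn a c %% minn a c < minn a c by apply: ltn_pmod; lia.
by move=> lt_mod; congr S; apply: xi_fuel_enough; lia.
Qed.

Lemma xi0 a : xi a 0 = 0.
Proof. by case: a. Qed.

Lemma xiC a c : xi a c = xi c a.
Proof.
case: a => [|a]; case: c => [|c] //.
by rewrite xiE // [RHS]xiE // minnC maxnC.
Qed.

Lemma xi_addr x y : xi x (x + y) = xi x y + (y < x).
Proof.
have [-> | x_gt0] := posnP x; first by rewrite add0n ltn0 addn0.
have [-> | y_gt0] := posnP y; first by rewrite addn0 xi0 x_gt0 xiE // minnn maxnn modnn xi0.
rewrite xiE ?addn_gt0 ?x_gt0 // (minn_idPl (leq_addr y x)) (maxn_idPr (leq_addr y x)).
rewrite modnDl; have [lt_yx | le_xy] := ltnP y x.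
  by rewrite modn_small // addn1.
by rewrite addn0 [RHS]xiE // (minn_idPl le_xy) (maxn_idPr le_xy).
Qed.

Lemma xi_addl x y : xi (x + y) y = xi x y + (x < y).
Proof. by rewrite xiC addnC xi_addr xiC. Qed.

Lemma odd_sigma x t : odd (sigma (x :: t)) = (x == last x t).
Proof.
elim: t x => [|y t IHt] x; first by rewrite /= eqxx.
by rewrite /= oddD IHt; case: x y (last y t) => [] [] [].
Qed.

Definition ordered_by (x : letter) (a c : nat) : bool :=
  if x is Lt then 0 < a <= c else c < a.

(* Usually s = xi a c + 1; prepending R to a word with a = c (such as LR)
   adds a run but no division, hence only the upper bound xi a c + 2. *)
Definition runs_inv (x : letter) (a c s : nat) : Prop :=
  [/\ ordered_by x a c, xi a c < s <= (xi a c).+2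
    & (c == 0) || (a == c) -> s = (xi a c).+1].

Lemma runs_inv_cons x y a c s : runs_inv y a c s ->
  runs_inv x (if x is Rt then a + c else a) (if x is Lt then a + c else c)
           (s + (x != y)).
Proof.
case; rewrite /runs_inv.
by case: x; case: y => /=; rewrite ?xi_addr ?xi_addl; split; lia.
Qed.

Lemma runs_inv_rcons_Rt u :
  let w := rcons u Rt in runs_inv (head Rt w) (mx_a w) (mx_c w) (sigma w).
Proof.
elim: u => [|x u IHu] /=; first by rewrite mx_a_Rt mx_c_Rt.
case def_w: (rcons u Rt) IHu => [|y t] IHu; first by case: u def_w.
by rewrite (mx_a_cons x) (mx_c_cons x); apply: runs_inv_cons.
Qed.

Lemma even_between n s : ~~ odd s -> n < s <= n.+2 -> s = 2 * (n %/ 2) + 2.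
Proof. lia. Qed.

Theorem lemma12 (W' : seq letter) :
  let W := Lt :: rcons W' Rt in
  sigma W = (2 * ((xi (word_mx W ord0 ord0) (word_mx W (@inord 1 1) ord0)) %/ 2) + 2)%N.
Proof.
move=> W; apply: even_between.
  by rewrite odd_sigma last_rcons.
by case: (runs_inv_rcons_Rt (Lt :: W')).
Qed.
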